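(* Let $r>1$ and $0\le\theta\le\frac{\pi}{2}$. Then all four roots (counted with multiplicity) of the equation $$ re^{-i\theta}w^4-w^3+w-re^{i\theta}=0 $$ in the variable $w\in\mathbb{C}$ lie on the unit circle $\{w:|w|=1\}$. *)

From Stdlib Require Import Reals.
From Coquelicot Require Export Coquelicot.
Open Scope R_scope.

Definition cexpi (t : R) : C := (cos t, sin t).

Definition quartic (r th : R) (w : C) : C :=
  (RtoC r * cexpi (- th) * Cpow w 4 - Cpow w 3 + w - RtoC r * cexpi th)%C.

From Stdlib Require Import Reals Lra Psatz.
From Coquelicot Require Import Coquelicot.
Open Scope R_scope.

(* Put m = |w|^2 and z = e^{-i th} w^2, so that |z| = m.  Multiplying the
   quartic by conj(w)^2 turns it into r (m^2 z - conj z) = m^2 w - m conj w.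
   For m <> 1 the real part can be divided by m - 1, leaving
     r (m+1) Re z = m Re w   and   r (m^2+1) Im z = m (m+1) Im w.
   Since (m+1)^2 >= m and (m^2+1)^2 >= m (m+1)^2, squaring and adding gives
   m >= r^2 m, which is impossible for r > 1 and m > 0 (w = 0 is no root). *)

Definition twisted_sq (th : R) (w : C) : C := (cexpi (- th) * w * w)%C.

Lemma Cmod_twisted_sq (th : R) (w : C) : Cmod (twisted_sq th w) ^ 2 = (Cmod w ^ 2) ^ 2.
Proof.
  rewrite !Cmod2_alt; destruct w as [x y]; unfold twisted_sq, cexpi; simpl.
  rewrite cos_neg, sin_neg.
  pose proof (sin2_cos2 th) as cs; unfold Rsqr in cs.
  transitivity ((sin th * sin th + cos th * cos th) * (x ^ 2 + y ^ 2) ^ 2); [ring|].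
  rewrite cs; ring.
Qed.

Lemma Re_conj_sq_quartic (r th : R) (w : C) :
  Re (Cconj w * Cconj w * quartic r th w)%C
  = (Cmod w ^ 2 - 1) * (r * (Cmod w ^ 2 + 1) * Re (twisted_sq th w) - Cmod w ^ 2 * Re w).
Proof.
  rewrite Cmod2_alt; destruct w as [x y]; unfold quartic, twisted_sq, cexpi; simpl.
  rewrite cos_neg, sin_neg; ring.
Qed.

Lemma Im_conj_sq_quartic (r th : R) (w : C) :
  Im (Cconj w * Cconj w * quartic r th w)%C
  = r * ((Cmod w ^ 2) ^ 2 + 1) * Im (twisted_sq th w) - Cmod w ^ 2 * (Cmod w ^ 2 + 1) * Im w.
Proof.
  rewrite Cmod2_alt; destruct w as [x y]; unfold quartic, twisted_sq, cexpi; simpl.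
  rewrite cos_neg, sin_neg; ring.
Qed.

Lemma quartic0_neq0 (r th : R) : r <> 0 -> quartic r th 0%C <> 0%C.
Proof.
  intros r_neq0 q0.
  assert (re0 : Re (quartic r th 0) = 0) by (rewrite q0; reflexivity).
  assert (im0 : Im (quartic r th 0) = 0) by (rewrite q0; reflexivity).
  unfold quartic, cexpi in re0, im0; simpl in re0, im0.
  pose proof (sin2_cos2 th) as cs; unfold Rsqr in cs.
  nra.
Qed.

Lemma sq_add1_ge (m : R) : 0 <= m -> m <= (m + 1) ^ 2.
Proof. intros; nra. Qed.

Lemma sq_sq_add1_ge (m : R) : 0 <= m -> m * (m + 1) ^ 2 <= (m ^ 2 + 1) ^ 2.
Proof.
  intros m_ge0.
  replace ((m ^ 2 + 1) ^ 2) with (m * (m + 1) ^ 2 + (m - 1) ^ 2 * (m ^ 2 + m + 1)) by ring.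
  assert (0 <= (m - 1) ^ 2 * (m ^ 2 + m + 1)) by (apply Rmult_le_pos; [apply pow2_ge_0 | nra]).
  lra.
Qed.

Lemma off_circle_system_infeasible (r m x y p q : R) :
  1 < r -> 0 < m -> x ^ 2 + y ^ 2 = m -> p ^ 2 + q ^ 2 = m ^ 2 ->
  r * (m + 1) * p = m * x -> r * (m ^ 2 + 1) * q = m * (m + 1) * y -> False.
Proof.
  intros r_gt1 m_gt0 xy_m pq_m eq_re eq_im.
  assert (sum_sq : (m + 1) ^ 2 * (r * (m + 1) * p) ^ 2 + (r * (m ^ 2 + 1) * q) ^ 2
                   = m ^ 2 * (m + 1) ^ 2 * m).
  { rewrite eq_re, eq_im, <- xy_m; ring. }
  assert (lower : r ^ 2 * ((m + 1) ^ 2 * m * (p ^ 2 + q ^ 2))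
                  <= (m + 1) ^ 2 * (r * (m + 1) * p) ^ 2 + (r * (m ^ 2 + 1) * q) ^ 2).
  { pose proof (sq_add1_ge m (Rlt_le _ _ m_gt0)) as h1.
    pose proof (sq_sq_add1_ge m (Rlt_le _ _ m_gt0)) as h2.
    assert (hp : (m + 1) ^ 2 * m * p ^ 2 <= (m + 1) ^ 2 * (m + 1) ^ 2 * p ^ 2).
    { apply Rmult_le_compat_r; [nra|]. apply Rmult_le_compat_l; nra. }
    assert (hq : (m + 1) ^ 2 * m * q ^ 2 <= (m ^ 2 + 1) ^ 2 * q ^ 2).
    { apply Rmult_le_compat_r; nra. }
    assert (0 <= r ^ 2) by nra.
    nra. }
  rewrite pq_m, sum_sq in lower.
  replace ((m + 1) ^ 2 * m * m ^ 2) with (m ^ 2 * (m + 1) ^ 2 * m) in lower by ring.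
  assert (0 < m ^ 2 * (m + 1) ^ 2 * m) by (repeat apply Rmult_lt_0_compat; nra).
  assert (1 < r ^ 2) by nra.
  nra.
Qed.

Theorem theorem3p3 (r th : R) (hr : 1 < r) (hth0 : 0 <= th) (hth1 : th <= PI / 2)
  (w : C) : quartic r th w = 0%C -> Cmod w = 1.
Proof.
  intros root.
  assert (m_gt0 : 0 < Cmod w ^ 2).
  { apply pow_lt, Cmod_gt_0; intros w0; rewrite w0 in root.
    apply (quartic0_neq0 r th); [lra | exact root]. }
  destruct (Req_dec (Cmod w ^ 2) 1) as [m1 | m_neq1].
  { pose proof (Cmod_ge_0 w); nra. }
  exfalso.
  pose proof (Re_conj_sq_quartic r th w) as eq_re.
  pose proof (Im_conj_sq_quartic r th w) as eq_im.
  rewrite root, Cmult_0_r in eq_re, eq_im.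
  change (Re 0%C) with 0 in eq_re; change (Im 0%C) with 0 in eq_im.
  apply (off_circle_system_infeasible r (Cmod w ^ 2) (Re w) (Im w)
           (Re (twisted_sq th w)) (Im (twisted_sq th w)) hr m_gt0).
  - symmetry; apply Cmod2_alt.
  - rewrite <- Cmod2_alt; apply Cmod_twisted_sq.
  - apply (Rmult_eq_reg_l (Cmod w ^ 2 - 1)); lra.
  - lra.
Qed.
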